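(* Let $A=[A_1,\ldots,A_n]$ be an $n\times n\times n$ ASHM such that $L(A)=1A_1+2A_2+\cdots+nA_n$ is a latin square (each of $1,\ldots,n$ appears exactly once in every row and every column). Then $A$ is a permutation hypermatrix.
   Context: An $n\times n$ alternating sign matrix (ASM) is an $n\times n$ matrix with entries in $\{0,1,-1\}$ such that in every row and column the nonzeros alternate in sign, beginning and ending with $+1$. An $n\times n\times n$ hypermatrix $A=[a_{ijk}]$ is written $A=[A_1,\ldots,A_n]$ with $A_k=[a_{ijk}]_{i,j}$. Its lines are obtained by fixing two of the three indices. $A$ is an alternating sign hypermatrix (ASHM) if all entries lie in $\{0,\pm1\}$ and in every line the nonzeros alternate in sign beginning and ending with $+1$. A permutation hypermatrix is a $(0,1)$-hypermatrix with exactly one $1$ in each line. *)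

From HB Require Import structures.
From mathcomp Require Import all_boot all_order all_algebra.
Set Implicit Arguments. Unset Strict Implicit. Unset Printing Implicit Defensive.
Import Order.TTheory GRing.Theory Num.Theory.
Local Open Scope ring_scope.

(* An n x n x n hypermatrix with integer entries: A i j k = a_{ijk},
   indices 0..n-1 (i.e. 'I_n) standing for 1..n. *)
Definition hypermatrix (n : nat) := 'I_n -> 'I_n -> 'I_n -> int.

Definition sign_entry (x : int) : bool := [|| x == 0, x == 1 | x == -1].

(* A line (finite sequence) whose nonzeros alternate in sign, beginning and
   ending with +1: the subsequence of nonzero entries is 1, -1, 1, ..., 1
   (nonempty, of odd length). *)
Definition alt_sign_line (s : seq int) : bool :=
  let nz := [seq x <- s | x != 0] in
  all sign_entry s &&
  [&& odd (size nz) &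
      nz == [seq ((-1) ^+ m : int) | m <- iota 0 (size nz)]].

Definition line1 n (A : hypermatrix n) (j k : 'I_n) : seq int :=
  [seq A i j k | i <- enum 'I_n].
Definition line2 n (A : hypermatrix n) (i k : 'I_n) : seq int :=
  [seq A i j k | j <- enum 'I_n].
Definition line3 n (A : hypermatrix n) (i j : 'I_n) : seq int :=
  [seq A i j k | k <- enum 'I_n].

Definition all_lines n (A : hypermatrix n) (P : seq int -> bool) : Prop :=
  (forall j k, P (line1 A j k)) /\
  (forall i k, P (line2 A i k)) /\
  (forall i j, P (line3 A i j)).

Definition is_ASHM n (A : hypermatrix n) : Prop :=
  (forall i j k, sign_entry (A i j k)) /\ all_lines A alt_sign_line.

Definition is_perm_hypermatrix n (A : hypermatrix n) : Prop :=
  (forall i j k, (A i j k == 0) || (A i j k == 1)) /\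
  all_lines A (fun s => count (pred1 1) s == 1%N).

(* L(A) = 1 A_1 + 2 A_2 + ... + n A_n, where A_k = [a_{ijk}]_{i,j}. *)
Definition Lmat n (A : hypermatrix n) : 'M[int]_n :=
  \matrix_(i, j) \sum_(k < n) (k.+1%:R : int) * A i j k.

Definition is_latin n (L : 'M[int]_n) : Prop :=
  (forall (i : 'I_n) (v : nat), (1 <= v <= n)%N ->
     #|[set j : 'I_n | L i j == v%:R]| = 1%N) /\
  (forall (j : 'I_n) (v : nat), (1 <= v <= n)%N ->
     #|[set i : 'I_n | L i j == v%:R]| = 1%N).

From HB Require Import structures.
From mathcomp Require Import all_boot all_order all_algebra.
From mathcomp Require Import zify.
Set Implicit Arguments. Unset Strict Implicit. Unset Printing Implicit Defensive.
Import Order.TTheory GRing.Theory Num.Theory.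
Local Open Scope ring_scope.

(* Let P_ij(m) = a_ij1 + ... + a_ijm be the partial sums along the third index.
   Alternation puts every P_ij(m) in {0, 1}, with P_ij(n) = 1, and Abel
   summation gives L_ij = n + 1 - (P_ij(1) + ... + P_ij(n)).  Hence the defect
   d_ij(m) = P_ij(m) - [L_ij <= m] sums to 0 over m; it also sums to 0 over j,
   because every row of every layer A_k sums to 1 and every row of the latin
   square contains the symbols 1, ..., m exactly once.  The defect is <= 0 for
   m >= L_ij and >= 0 for m < L_ij, so an induction on m shows that it
   vanishes.  Therefore a_ijk = [L_ij = k], and each line contains one 1. *)

Definition alternating (c : int) (s : seq int) : bool :=
  let nz := [seq x <- s | x != 0] in
  nz == [seq c * (-1) ^+ m | m <- iota 0 (size nz)].

Lemma alternating_cons c x s :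
  alternating c (x :: s) =
  if x == 0 then alternating c s else (x == c) && alternating (- c) s.
Proof.
rewrite /alternating /=; have [->|x_neq0] //= := eqVneq x 0.
rewrite eqseq_cons expr0 mulr1 -[1%N]/(1 + 0)%N iotaDl -map_comp.
congr (_ && (_ == _)); apply: eq_map => m /=.
by rewrite add1n exprS mulN1r mulrN mulNr.
Qed.

Lemma alternating_take c s m : alternating c s -> alternating c (take m s).
Proof.
elim: s c m => [|x s IHs] c [|m] //=.
rewrite !alternating_cons; case: (x == 0); first exact: IHs.
by case/andP=> -> /IHs ->.
Qed.

Lemma alternating_sum c s : c * c = 1 -> alternating c s ->
  c * \sum_(x <- s) x = (odd (size [seq x <- s | x != 0]))%:R.
Proof.
elim: s c => [|x s IHs] c cc; first by rewrite big_nil mulr0.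
rewrite alternating_cons big_cons /=.
have [-> /(IHs c cc)|_ /andP[/eqP-> alt_s]] := eqVneq x 0.
  by rewrite add0r.
have := IHs (- c); rewrite mulrNN mulNr => /(_ cc alt_s) sum_s.
by rewrite mulrDr cc -[c * _]opprK sum_s /=; case: (odd _); rewrite ?subrr ?subr0.
Qed.

Lemma alt_sign_line_alternating s : alt_sign_line s -> alternating 1 s.
Proof.
case/and3P=> _ _ /eqP nzE; apply/eqP; rewrite {1}nzE.
by apply: eq_map => m; rewrite mul1r.
Qed.

Lemma alt_sign_line_prefix_sum s m :
  alt_sign_line s -> 0 <= \sum_(x <- take m s) x <= 1.
Proof.
move/alt_sign_line_alternating/(alternating_take m)/(alternating_sum (mulr1 1)).
by rewrite mul1r => ->; case: (odd _).
Qed.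

Lemma alt_sign_line_sum s : alt_sign_line s -> \sum_(x <- s) x = 1.
Proof.
move=> line_s; have /and3P[_ odd_nz _] := line_s.
move: line_s => /alt_sign_line_alternating/(alternating_sum (mulr1 1)).
by rewrite mul1r odd_nz.
Qed.

Lemma sum_partial_sums (V : nmodType) (f : nat -> V) N :
  \sum_(m < N) \sum_(k < m.+1) f k + \sum_(k < N) f k *+ k.+1 =
  (\sum_(k < N) f k) *+ N.+1.
Proof.
elim: N => [|N IHN]; first by rewrite !big_ord0 add0r mul0rn.
rewrite 3!big_ord_recr /= addrACA IHN mulrnDl 2!(mulrS _ N.+1).
by rewrite -addrA addrCA addrA.
Qed.

Lemma sum_leq_succ l N : (\sum_(m < N) (l <= m.+1) = N - l.-1)%N.
Proof.
elim: N => [|N IHN]; first by rewrite big_ord0.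
by rewrite big_ord_recr /= IHN; lia.
Qed.

Lemma sum_eq_succ l N : (\sum_(v < N) (l == v.+1) = (0 < l <= N))%N.
Proof.
elim: N => [|N IHN]; first by rewrite big_ord0; case: l.
by rewrite big_ord_recr /= IHN; lia.
Qed.

Lemma sign_pattern_eq0 (R : numDomainType) (J : finType) (N : nat)
    (t : J -> nat) (d : J -> nat -> R) :
  (forall j, \sum_(m < N) d j m = 0) ->
  (forall m, (m < N)%N -> \sum_j d j m = 0) ->
  (forall j m, (m < N)%N -> (t j <= m)%N -> d j m <= 0) ->
  (forall j m, (m < N)%N -> (m < t j)%N -> 0 <= d j m) ->
  forall j m, (m < N)%N -> d j m = 0.
Proof.
move=> row0 col0 d_le0 d_ge0 j m; elim/ltn_ind: m j => m IHm j lt_mN.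
have d_past_eq0 j' : (t j' <= m)%N -> d j' m = 0.
  move=> le_tm; have dN_ge0 (k : 'I_N) : 0 <= - d j' k.
    rewrite oppr_ge0; have [lt_km|le_mk] := ltnP k m.
      by rewrite IHm // (ltn_trans lt_km).
    exact/d_le0/(leq_trans le_tm).
  have sumN0 : \sum_(k < N) - d j' k = 0 by rewrite sumrN row0 oppr0.
  apply/eqP; rewrite -oppr_eq0; apply/eqP.
  exact: (psumr_eq0P (fun k _ => dN_ge0 k) sumN0 (i := Ordinal lt_mN)).
have d_col_ge0 j' : 0 <= d j' m.
  by have [/d_past_eq0->|/(d_ge0 _ _ lt_mN)//] := leqP (t j') m.
exact: (psumr_eq0P (fun j' _ => d_col_ge0 j') (col0 m lt_mN) (i := j)).
Qed.

Lemma count_enum_card (T : finType) (a : pred T) :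
  count a (enum T) = #|[set x | a x]|.
Proof. by rewrite -sum1_count -sum1dep_card big_enum_cond. Qed.

Lemma sum_nat_of_bool_card (T : finType) (a : pred T) :
  (\sum_x a x)%N = #|[set x | a x]|.
Proof.
by rewrite -sum1dep_card [RHS]big_mkcond; apply: eq_bigr => x _; case: (a x).
Qed.

Section LatinASHM.

Variables (n : nat) (A : hypermatrix n.+1).
(* Only the alternation of the lines along the second and third indices is
   used. *)
Hypotheses (A_ASHM : is_ASHM A) (L_latin : is_latin (Lmat A)).

Definition psum i j m := \sum_(k < m.+1) A i j (inord k).

Lemma line3_mkseq i j : line3 A i j = mkseq (fun k => A i j (inord k)) n.+1.
Proof.
rewrite /line3 /mkseq -val_enum_ord -map_comp.
by apply: eq_map => k /=; rewrite inord_val.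
Qed.

Lemma psum_bounds i j m : (m <= n)%N -> 0 <= psum i j m <= 1.
Proof.
move=> le_mn; have := alt_sign_line_prefix_sum m.+1 (A_ASHM.2.2.2 i j).
rewrite line3_mkseq /mkseq -map_take take_iota (minn_idPl _) // big_map.
by rewrite -[iota 0 _]/(index_iota 0 m.+1) big_mkord.
Qed.

Lemma psum_last i j : psum i j n = 1.
Proof.
have := alt_sign_line_sum (A_ASHM.2.2.2 i j).
by rewrite line3_mkseq /mkseq big_map -[iota 0 _]/(index_iota 0 n.+1) big_mkord.
Qed.

Lemma layer_row_sum i k : \sum_j A i j k = 1.
Proof. by have := alt_sign_line_sum (A_ASHM.2.2.1 i k); rewrite big_map big_enum. Qed.

Lemma sum_psum_row i m : \sum_j psum i j m = m.+1%:R.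
Proof.
rewrite /psum exchange_big (eq_bigr (fun=> 1)) ?sumr_const ?card_ord // => k _.
exact: layer_row_sum.
Qed.

Lemma Lmat_add_sum_psum i j : Lmat A i j + \sum_(m < n.+1) psum i j m = n.+2%:R.
Proof.
rewrite mxE (eq_bigr (fun k : 'I_n.+1 => A i j (inord k) *+ k.+1)).
  rewrite addrC /psum (sum_partial_sums (fun k => A i j (inord k))).
  by rewrite -/(psum i j n) psum_last.
by move=> k _; rewrite inord_val mulr_natl.
Qed.

Lemma Lmat_bounds i j : 1 <= Lmat A i j <= n.+1%:R.
Proof.
have le_sum : \sum_(m < n.+1) psum i j m <= n.+1%:R.
  rewrite -[n.+1 in X in _ <= X]card_ord -sumr_const.
  by apply: ler_sum => m _; case/andP: (psum_bounds i j (ltn_ord m)).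
have ge_sum : 1 <= \sum_(m < n.+1) psum i j m.
  rewrite big_ord_recr /= psum_last lerDr.
  by apply: sumr_ge0 => m _; case/andP: (psum_bounds i j (ltnW (ltn_ord m))).
move: le_sum ge_sum (Lmat_add_sum_psum i j); rewrite !natz; lia.
Qed.

Definition symbol i j : nat := `|Lmat A i j|%N.

Lemma Lmat_symbol i j : Lmat A i j = (symbol i j)%:R.
Proof.
by rewrite natz gez0_abs //; case/andP: (Lmat_bounds i j) => /(le_trans ler01).
Qed.

Lemma symbol_bounds i j : (0 < symbol i j <= n.+1)%N.
Proof. by have := Lmat_bounds i j; rewrite Lmat_symbol !natz; lia. Qed.

Lemma sum_symbol_le i m : (m <= n.+1)%N -> (\sum_j (symbol i j <= m) = m)%N.
Proof.
move=> le_m.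
rewrite (eq_bigr (fun j => \sum_(v < m) (symbol i j == v.+1))%N); last first.
  by move=> j _; rewrite sum_eq_succ; case/andP: (symbol_bounds i j) => ->.
rewrite exchange_big /= (eq_bigr (fun=> 1%N)) ?sum1_card ?card_ord // => v _.
rewrite sum_nat_of_bool_card -(L_latin.1 i v.+1) ?(leq_trans (ltn_ord v)) //.
by apply: eq_card => j; rewrite !inE Lmat_symbol eqr_nat.
Qed.

Lemma psum_indicator i j m :
  (m <= n)%N -> psum i j m = (symbol i j <= m.+1)%N%:R.
Proof.
rewrite -ltnS => lt_mn; apply/eqP; rewrite -subr_eq0; apply/eqP; move: j m lt_mn.
apply: (sign_pattern_eq0 (N := n.+1) (t := fun j => (symbol i j - 1)%N)
  (d := fun j m => psum i j m - (symbol i j <= m.+1)%N%:R))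
  => [j|m lt_mn|j m lt_mn|j m lt_mn] /=.
- rewrite sumrB (canRL (addKr _) (Lmat_add_sum_psum i j)) -natr_sum.
  rewrite sum_leq_succ Lmat_symbol -subn1 !natz; have := symbol_bounds i j; lia.
- by rewrite sumrB -natr_sum sum_psum_row sum_symbol_le ?subrr.
- rewrite leq_subLR add1n => ->; rewrite subr_le0.
  by case/andP: (psum_bounds i j lt_mn).
- rewrite ltn_subRL add1n ltnNge => /negbTE->; rewrite subr0.
  by case/andP: (psum_bounds i j lt_mn).
Qed.

Lemma entry_indicator i j (k : 'I_n.+1) : A i j k = (symbol i j == k.+1)%N%:R.
Proof.
have /andP[symbol_gt0 _] := symbol_bounds i j.
rewrite -[in LHS](inord_val k).
case: (nat_of_ord k) (ltn_ord k) => [|{}k]; rewrite ltnS => le_kn.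
  have := psum_indicator i j (leq0n n); rewrite /psum big_ord1 => ->.
  by case: (symbol i j) symbol_gt0 => [|[]].
have := psum_indicator i j le_kn; rewrite /psum big_ord_recr /= -/(psum i j k).
rewrite psum_indicator ?(ltnW le_kn) // => /(canRL (addKr _)) ->.
by rewrite -[(_ <= k.+1)%N]ltnS; case: ltngtP => _; rewrite ?oppr0 ?add0r ?addNr.
Qed.

Lemma is_perm_hypermatrix_of_latin : is_perm_hypermatrix A.
Proof.
have entry_eq1 i j k : (A i j k == 1) = (symbol i j == k.+1).
  by rewrite entry_indicator; case: (symbol i j == k.+1).
split; first by move=> i j k; rewrite entry_indicator; case: (symbol i j == k.+1).
split; [|split] => [j k|i k|i j]; rewrite count_map count_enum_card; apply/eqP.
- rewrite -(L_latin.2 j k.+1) ?ltn_ord //; apply: eq_card => i.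
  by rewrite !inE entry_eq1 Lmat_symbol eqr_nat.
- rewrite -(L_latin.1 i k.+1) ?ltn_ord //; apply: eq_card => j.
  by rewrite !inE entry_eq1 Lmat_symbol eqr_nat.
rewrite -sum_nat_of_bool_card.
rewrite (eq_bigr (fun k : 'I_n.+1 => nat_of_bool (symbol i j == k.+1))).
  by rewrite sum_eq_succ symbol_bounds.
by move=> k _; rewrite /= entry_eq1.
Qed.

End LatinASHM.

Theorem mainTheorem4 (n : nat) (A : hypermatrix n) :
  is_ASHM A -> is_latin (Lmat A) -> is_perm_hypermatrix A.
Proof.
case: n A => [|n] A; last exact: is_perm_hypermatrix_of_latin.
by move=> _ _; split; [case | split; [case | split; case]].
Qed.
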